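(* Assume $d\ge3$. The following are equivalent: (i) $a^*_i+a^*_{i+1}=a^*_{i+1}+a^*_{i+2}$ for every integer $i$ with $0\le i\le d-3$; (ii) $a^*_i+a^*_{i+1}=a^*_{i+1}+a^*_{i+2}$ for some integer $i$ with $0\le i\le d-3$; (iii) $r-s=0$ or $r+s=0$.
   Context: Fix an integer $d\ge0$ and $r,s\in(-1,\infty)$. Write $(x)_i=x(x+1)\cdots(x+i-1)$, $(x)_0=1$. For $0\le i\le d$ put $\theta^*_i=i$. Put $b^*_i=\frac{(d-i)(i-d-s)(2d-2i+r+s+2)_i}{(2d-2i+r+s)_{i+1}}$ ($0\le i\le d-1$), $c^*_i=\frac{i(i-d-r-1)(d-i+r+s+1)_{d-i}}{(d-i+r+s+2)_{d-i+1}}$ ($1\le i\le d$), $b^*_d=c^*_0=0$, and $a^*_i=\theta^*_0-b^*_i-c^*_i$ for $0\le i\le d$. *)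

From mathcomp Require Import all_boot all_order all_algebra.
Set Implicit Arguments. Unset Strict Implicit. Unset Printing Implicit Defensive.
Import Order.TTheory GRing.Theory Num.Theory.
Local Open Scope ring_scope.

Definition poch (R : ringType) (x : R) (n : nat) : R :=
  \prod_(k < n) (x + k%:R).

Definition thetastar (R : ringType) (i : nat) : R := i%:R.

(* b*_i for 0 <= i <= d-1, and b*_d = 0 (also 0 for i > d, unused) *)
Definition bstar (R : fieldType) (d : nat) (r s : R) (i : nat) : R :=
  if (i < d)%N then
    (d - i)%:R * (i%:R - d%:R - s) * poch ((2 * (d - i))%:R + r + s + 2) i
    / poch ((2 * (d - i))%:R + r + s) i.+1
  else 0.

Definition cstar (R : fieldType) (d : nat) (r s : R) (i : nat) : R :=
  if (0 < i)%N then
    i%:R * (i%:R - d%:R - r - 1) * poch ((d - i)%:R + r + s + 1) (d - i)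
    / poch ((d - i)%:R + r + s + 2) (d - i).+1
  else 0.

Definition astar (R : fieldType) (d : nat) (r s : R) (i : nat) : R :=
  thetastar R 0 - bstar d r s i - cstar d r s i.

From mathcomp Require Import all_boot all_order all_algebra.
From mathcomp Require Import ring lra zify.
Set Implicit Arguments.
Unset Strict Implicit.
Unset Printing Implicit Defensive.
Import Order.TTheory GRing.Theory Num.Theory.
Local Open Scope ring_scope.

(* The Pochhammer quotients in b*_i and c*_i telescope, so a*_i is a rational
   function of n = d - i and i.  The difference a*_i - a*_(i+2) factors as
   (r - s)(r + s) times a function that is strictly negative once r, s > -1 and
   n >= 3; and the relation at index i is just a*_i = a*_(i+2). *)

Lemma poch_recl (R : nzRingType) (x : R) n : poch x n.+1 = x * poch (x + 1) n.
Proof.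
rewrite /poch big_ord_recl /= addr0; congr (_ * _); apply: eq_bigr => k _.
by rewrite /bump /= natrD addrA.
Qed.

Lemma poch_recr (R : nzRingType) (x : R) n : poch x n.+1 = poch x n * (x + n%:R).
Proof. by rewrite /poch big_ord_recr. Qed.

Lemma poch_gt0 (R : numDomainType) (x : R) n : 0 < x -> 0 < poch x n.
Proof. by move=> x_gt0; apply: prodr_gt0 => k _; rewrite ltr_wpDr ?ler0n. Qed.

Lemma poch_ratio1 (R : numFieldType) (x : R) n : 0 < x ->
  poch x n / poch (x + 1) n.+1 = x / ((x + n%:R) * (x + n%:R + 1)).
Proof.
move=> x_gt0; have xn_gt0 : 0 < x + n%:R by rewrite ltr_wpDr ?ler0n.
have -> : poch x n = x * poch (x + 1) n / (x + n%:R).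
  by rewrite -poch_recl poch_recr mulfK ?gt_eqF.
rewrite poch_recr; field.
by rewrite !gt_eqF ?poch_gt0 ?ltr_wpDr ?addr_gt0.
Qed.

Lemma poch_ratio2 (R : numFieldType) (x : R) n : 0 < x ->
  poch (x + 2) n / poch x n.+1 = (x + n%:R + 1) / (x * (x + 1)).
Proof.
move=> x_gt0; have x1_gt0 : 0 < x + 1 by rewrite addr_gt0.
have -> : poch (x + 2) n = poch x n.+1 * (x + n%:R + 1) / (x * (x + 1)).
  rewrite -addrA natr1 -poch_recr !poch_recl mulrA -addrA -[1 + 1]/(2%:R).
  by rewrite mulrAC divff ?mul1r // mulf_neq0 ?gt_eqF.
field; by rewrite !gt_eqF ?poch_gt0.
Qed.

Definition bstar_cf (R : fieldType) (n i r s : R) : R :=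
  - n * (n + s) * (2 * n + r + s + i + 1) / ((2 * n + r + s) * (2 * n + r + s + 1)).

Definition cstar_cf (R : fieldType) (n i r s : R) : R :=
  - i * (n + r + 1) * (n + r + s + 1) / ((2 * n + r + s + 1) * (2 * n + r + s + 2)).

Definition astar_cf (R : fieldType) (n i r s : R) : R :=
  - bstar_cf n i r s - cstar_cf n i r s.

Lemma natr_subnK {R : nzSemiRingType} m n : (m <= n)%N -> (n - m)%:R + m%:R = n%:R :> R.
Proof. by move=> le_mn; rewrite -natrD subnK. Qed.

Lemma bstarE (R : realFieldType) d (r s : R) j : -1 < r -> -1 < s -> (j < d)%N ->
  bstar d r s j = bstar_cf (d - j)%:R j%:R r s.
Proof.
move=> r_gt s_gt lt_jd; rewrite /bstar /bstar_cf lt_jd.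
have n_ge1 : 1 <= (d - j)%:R :> R by rewrite ler1n subn_gt0.
have x_gt0 : 0 < (2 * (d - j))%:R + r + s by rewrite natrM; lra.
rewrite -mulrA poch_ratio2 // -(natr_subnK (ltnW lt_jd)) natrM; field.
by rewrite !gt_eqF //; lra.
Qed.

Lemma cstarE (R : realFieldType) d (r s : R) j : -1 < r -> -1 < s -> (j < d)%N ->
  cstar d r s j = cstar_cf (d - j)%:R j%:R r s.
Proof.
move=> r_gt s_gt lt_jd; rewrite /cstar /cstar_cf; case: posnP => [-> | j_gt0].
  by rewrite oppr0 !mul0r.
have n_ge1 : 1 <= (d - j)%:R :> R by rewrite ler1n subn_gt0.
have y_gt0 : 0 < (d - j)%:R + r + s + 1 by lra.
rewrite (_ : _ + 2 = (d - j)%:R + r + s + 1 + 1); last by ring.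
rewrite -mulrA poch_ratio1 // -(natr_subnK (ltnW lt_jd)); field.
by rewrite !gt_eqF //; lra.
Qed.

Lemma astarE (R : realFieldType) d (r s : R) j : -1 < r -> -1 < s -> (j < d)%N ->
  astar d r s j = astar_cf (d - j)%:R j%:R r s.
Proof.
by move=> r_gt s_gt lt_jd; rewrite /astar bstarE // cstarE // /thetastar sub0r.
Qed.

Lemma astar_cf_sub2 (R : realFieldType) (n i r s : R) : 4 < 2 * n + r + s ->
  astar_cf n i r s - astar_cf (n - 2) (i + 2) r s =
  (r - s) * (r + s) * (- 2 * (2 * n + r + s - 1) * (2 * n + r + s + 2 * i + 2)
    / ((2 * n + r + s) * (2 * n + r + s + 2) * (2 * n + r + s - 2) * (2 * n + r + s - 4))).
Proof.
move=> t_gt4; rewrite /astar_cf /bstar_cf /cstar_cf; field.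
by rewrite !gt_eqF //; lra.
Qed.

Lemma astar_cf_eq2 (R : realFieldType) (n i r s : R) : 4 < 2 * n + r + s -> 0 <= i ->
  (astar_cf n i r s == astar_cf (n - 2) (i + 2) r s) = (r - s == 0) || (r + s == 0).
Proof.
move=> t_gt4 i_ge0; rewrite -subr_eq0 astar_cf_sub2 // mulf_eq0.
rewrite [X in _ || X]lt_eqF ?orbF -?mulf_eq0 //.
by rewrite !mulNr oppr_lt0 divr_gt0 ?mulr_gt0 //; lra.
Qed.

Lemma astar_eq2 (R : realFieldType) d (r s : R) i : -1 < r -> -1 < s -> (i.+2 < d)%N ->
  astar d r s i = astar d r s i.+2 <-> r - s = 0 \/ r + s = 0.
Proof.
move=> r_gt s_gt lt_i2d; apply: (iff_trans (rwP eqP)).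
rewrite !astarE // ?(ltn_trans _ lt_i2d) // -addn2 natrD.
have -> : (d - (i + 2))%:R = (d - i)%:R - 2 :> R by rewrite -natrB; [congr _%:R | ]; lia.
have n_ge3 : 3 <= (d - i)%:R :> R by rewrite ler_nat; lia.
have t_gt4 : 4 < 2 * (d - i)%:R + r + s by lra.
rewrite astar_cf_eq2 ?ler0n //.
exact: iff_sym (rwP (orPP eqP eqP)).
Qed.

Theorem lemma2p9 (R : realFieldType) (d : nat) (r s : R) :
  (3 <= d)%N -> -1 < r -> -1 < s ->
  let P1 := forall i : nat, (i <= d - 3)%N ->
      astar d r s i + astar d r s i.+1 = astar d r s i.+1 + astar d r s i.+2 in
  let P2 := exists i : nat, (i <= d - 3)%N /\
      astar d r s i + astar d r s i.+1 = astar d r s i.+1 + astar d r s i.+2 in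
  let P3 := r - s = 0 \/ r + s = 0 in
  (P1 <-> P2) /\ (P2 <-> P3).
Proof.
move=> d_ge3 r_gt s_gt P1 P2 P3.
have stepP i : (i <= d - 3)%N ->
    astar d r s i + astar d r s i.+1 = astar d r s i.+1 + astar d r s i.+2 <-> P3.
  move=> le_i; have lt_i2d : (i.+2 < d)%N by lia.
  apply: iff_trans (astar_eq2 r_gt s_gt lt_i2d).
  by rewrite [astar _ _ _ i.+1 + _]addrC; split => [/addIr | ->].
split; split.
- by move=> allP; exists 0%N; split; [|apply: allP].
- by move=> [i [le_i /(stepP i le_i) p3]] j le_j; apply/(stepP j le_j).
- by move=> [i [le_i /(stepP i le_i)]].
- by move=> p3; exists 0%N; split; [|apply/(stepP 0%N)].
Qed.
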